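(* Let $G=(V,E)$ with weight $\mu$ be an infinite, connected, locally finite weighted graph satisfying condition $(p_0)$, let $m>1$, and fix $o\in V$. Assume either $(p,q)\in G_{5.1}=\{(p,q): p+q=m-1,\ p\ge 0,\ q>0\}$, or $(p,q)\in G_{5.2}=\{(p,q): p+q=m-1,\ q<0\}$ with $1<m<3$. Then there exists $k_0>0$ (depending only on $p_0$, $m$, $p$, $q$) such that if for some $\kappa\in(0,k_0)$ there are constants $C>0$ and $n_1$ with $$W_o(n)\le C\, e^{\kappa n}\quad\text{for all } n\ge n_1,$$ then the inequality $\Delta_m u+u^p|\nabla u|^q\le 0$ on $V$ admits no nontrivial positive solution.
   Context: Setting: $G=(V,E)$ is an infinite, connected, locally finite graph with no loops and no multiple edges; $x\sim y$ means $x$ and $y$ are joined by an edge. A weight is a symmetric function $\mu:V\times V\to[0,\infty)$ with $\mu_{xy}=\mu_{yx}>0$ if and only if $x\sim y$; the vertex measure is $\mu(x)=\sum_{y\sim x}\mu_{xy}$. For $m>1$ and $u:V\to\mathbb R$, $\Delta_m u(x)=\frac{1}{\mu(x)}\sum_{y\sim x}\mu_{xy}|u(y)-u(x)|^{m-2}(u(y)-u(x))$ and $|\nabla u(x)|=\big(\sum_{y\sim x}\frac{\mu_{xy}}{2\mu(x)}(u(y)-u(x))^2\big)^{1/2}$. Condition $(p_0)$: there is a constant $p_0>1$ such that $\mu_{xy}/\mu(x)\ge 1/p_0$ for all $x\sim y$. $d(x,y)$ is the graph (shortest path) distance, $B(o,n)=\{x\in V: d(o,x)\le n\}$, and $W_o(n)=\sum_{x\in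 B(o,n),\,y\in V,\,d(o,x)<d(o,y)}\mu_{xy}$. A nontrivial positive solution of $\Delta_m u+u^p|\nabla u|^q\le 0$ is a non-constant function $u:V\to(0,\infty)$ such that $\Delta_m u(x)+u(x)^p|\nabla u(x)|^q\le 0$ for every $x\in V$, with the conventions $0^0=1$, $0^q=0$ for $q>0$, and, for $q<0$, $|\nabla u(x)|^q=+\infty$ when $|\nabla u(x)|=0$ (so the inequality fails at such $x$). *)

From mathcomp Require Import all_boot all_order all_algebra.
From mathcomp Require Import all_classical all_reals all_analysis.
Set Implicit Arguments. Unset Strict Implicit. Unset Printing Implicit Defensive.
Import Order.TTheory GRing.Theory Num.Theory.
Local Open Scope classical_set_scope.
Local Open Scope ring_scope.

Section GraphDefs.
Context {R : realType} {V : choiceType}.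
Variable adj : V -> V -> Prop.
Variable mu : V -> V -> R.

Inductive walk : nat -> V -> V -> Prop :=
| walk0 x : walk 0 x x
| walkS n x y z : adj x y -> walk n y z -> walk n.+1 x z.

Definition simple_graph : Prop :=
  (forall x y, adj x y -> adj y x) /\ (forall x, ~ adj x x).
Definition locally_finite : Prop := forall x, finite_set [set y | adj x y].
Definition graph_connected : Prop := forall x y, exists n, walk n x y.
Definition infinite_graph (T : Type) : Prop := infinite_set [set: T].

Definition is_weight : Prop :=
  (forall x y, mu x y = mu y x) /\ (forall x y, 0 <= mu x y) /\
  (forall x y, 0 < mu x y <-> adj x y).

Definition vmeas (x : V) : R := \sum_(y \in [set y | adj x y]) mu x y.

Definition cond_p0 (p0 : R) : Prop :=
  1 < p0 /\ forall x y, adj x y -> p0^-1 <= mu x y / vmeas x.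

(** m-Laplacian (with |t|^(m-2) t read through powR; it is 0 at t = 0). *)
Definition mLap (m : R) (u : V -> R) (x : V) : R :=
  (vmeas x)^-1 * \sum_(y \in [set y | adj x y])
      mu x y * (powR `|u y - u x| (m - 2) * (u y - u x)).

Definition gradn (u : V -> R) (x : V) : R :=
  Num.sqrt (\sum_(y \in [set y | adj x y])
      mu x y / (2 * vmeas x) * (u y - u x) ^+ 2).

(** Graph distance (0 if no walk exists; irrelevant for connected graphs). *)
Lemma ex_walkb (x y : V) :
  (exists n, walk n x y) -> exists n, `[< walk n x y >].
Proof. by case=> n h; exists n; apply: asboolT. Qed.

Definition gdist (x y : V) : nat :=
  match pselect (exists n, walk n x y) with
  | left H => ex_minn (ex_walkb H)
  | right _ => 0%N
  end.

Definition W_o (o : V) (n : nat) : R :=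
  \sum_(x \in [set x | (gdist o x <= n)%N])
     \sum_(y \in [set y | (gdist o x < gdist o y)%N]) mu x y.

(** u is a nontrivial positive solution of Delta_m u + u^p |grad u|^q <= 0.
    Conventions: 0^0 = 1 and 0^q = 0 for q > 0 (as powR does);
    for q < 0 the inequality fails wherever |grad u| = 0. *)
Definition nontriv_pos_sol (m p q : R) (u : V -> R) : Prop :=
  (exists x y, u x <> u y) /\ (forall x, 0 < u x) /\
  (forall x, (q < 0 -> gradn u x <> 0) /\
             mLap m u x + powR (u x) p * powR (gradn u x) q <= 0).

End GraphDefs.

(* With the normalized flux
   flux x y = |u y - u x|^(m-2) (u y - u x) / u(x)^(m-1) and the source
   source x = u(x)^(p+1-m) |grad u|^q (x) = (|grad u| (x) / u(x))^q, dividing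
   the inequality at x by u(x)^(m-1) says that the flux leaving x dominates
   mu(x) source(x).  The flux is antisymmetric up to a nonnegative term, is at
   most 1, and on an edge it is at most K source(y): for q > 0 because
   |u x - u y| <= sqrt (2 p0) |grad u| (y), for q < 0 because of the Harnack
   bound u <= A u(y) on the neighbours of y.  Hence the mass
   M(n) = sum_(x in B(o,n)) mu(x) source(x) satisfies
   M(n) <= (flux out of B(o,n)) <= min (W_o(n), K (M(n+1) - M(n))),
   so M grows like (1 + 1/K)^n, which is incompatible with
   W_o(n) <= C e^(kappa n) once kappa < ln (1 + 1/K); M is positive for large n
   because u is not constant. *)

From mathcomp Require Import all_boot all_order all_algebra.
From mathcomp Require Import all_classical all_reals all_analysis.
From mathcomp Require Import finmap ring lra.
Import Order.TTheory GRing.Theory Num.Theory.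
Set Implicit Arguments. Unset Strict Implicit. Unset Printing Implicit Defensive.
Local Open Scope classical_set_scope.
Local Open Scope ring_scope.

Section Walks.
Variables (V : choiceType) (adj : V -> V -> Prop).

Lemma walk_rcons n x y z : walk adj n x y -> adj y z -> walk adj n.+1 x z.
Proof.
elim=> [x0 a|n0 x0 y0 z0 a _ IH b]; first exact: walkS a (walk0 _ _).
exact: walkS a (IH b).
Qed.

Lemma walk_last n x z : walk adj n.+1 x z -> exists2 y, walk adj n x y & adj y z.
Proof.
elim: n x => [|n IH] x w; inversion w as [|k a b c axb wb]; subst.
  by inversion wb; subst; exists x => //; apply: walk0.
by have [y' w' a'] := IH _ wb; exists y' => //; apply: walkS axb w'.
Qed.

Lemma walk0E x y : walk adj 0 x y -> x = y.
Proof. by move=> w; inversion w. Qed.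

Lemma walk_invariant (T : Type) (f : V -> T) n a b :
  (forall x y, adj x y -> f x = f y) -> walk adj n a b -> f a = f b.
Proof. by move=> f_adj; elim=> // k x y z axy _ <-; apply: f_adj. Qed.

Hypothesis conn : graph_connected adj.

Lemma gdist_walk x y : walk adj (gdist adj x y) x y.
Proof.
rewrite /gdist; case: pselect => [H|H]; last by case: H; apply: conn.
by case: ex_minnP => n /asboolP.
Qed.

Lemma gdist_min x y n : walk adj n x y -> (gdist adj x y <= n)%N.
Proof.
rewrite /gdist; case: pselect => [H|H]; last by case: H; apply: conn.
by case: ex_minnP => k _ kmin wn; apply/kmin/asboolP.
Qed.

Lemma gdist_adj o x y : adj x y -> (gdist adj o y <= (gdist adj o x).+1)%N.
Proof. by move=> axy; apply/gdist_min/(walk_rcons (gdist_walk o x)). Qed.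

Lemma exists_adj_neq (T : Type) (f : V -> T) :
  (exists a b, f a <> f b) -> exists x y, adj x y /\ f x <> f y.
Proof.
move=> [a [b fab]]; apply: contrapT => nofxy; apply: fab.
have [n w] := conn a b; apply: (walk_invariant _ w) => x y axy.
by apply: contrapT => fxy; apply: nofxy; exists x, y.
Qed.

Lemma infinite_exists_adj : infinite_graph V -> forall x, exists y, adj x y.
Proof.
move=> inf x; have [y yx] : exists y, y <> x.
  apply: contrapT => H; apply: inf; apply: (sub_finite_set _ (finite_set1 x)).
  by move=> y _ /=; apply: contrapT => yx; apply: H; exists y.
have [[|n] w] := conn x y; first by case: yx; rewrite (walk0E w).
by inversion w as [|k a b c axb _]; exists b.
Qed.

Hypothesis lf : locally_finite adj.

Lemma ball_finite o n : finite_set [set x | (gdist adj o x <= n)%N].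
Proof.
elim: n => [|n IH].
  apply: (sub_finite_set _ (finite_set1 o)) => x /=; rewrite leqn0 => /eqP d0.
  by have := gdist_walk o x; rewrite d0 => /walk0E.
pose Bn := [set x | (gdist adj o x <= n)%N].
apply: (sub_finite_set (B := Bn `|` \bigcup_(x in Bn) [set y | adj x y])).
  move=> y /= dy; case: (leqP (gdist adj o y) n) => [|ny]; first by left.
  have dyn : gdist adj o y = n.+1 by apply/eqP; rewrite eqn_leq dy ny.
  have := gdist_walk o y; rewrite dyn => /walk_last [x wx axy].
  by right; exists x => //; apply: gdist_min.
by rewrite finite_setU; split=> //; apply: bigcup_finite => // x _; apply: lf.
Qed.

End Walks.

Section FiniteSums.
Variables (R : realType) (T : choiceType).

Lemma fsbig_ge_term (D : set T) (F : T -> R) z : finite_set D -> D z ->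
  (forall x, D x -> 0 <= F x) -> F z <= \sum_(x \in D) F x.
Proof.
move=> fD Dz F0; rewrite (fsbigD1 z) //= lerDl.
by apply: fsumr_ge0 => x [Dx _]; apply: F0.
Qed.

Lemma ler_fsum (D : set T) (F G : T -> R) : finite_set D ->
  (forall x, D x -> F x <= G x) -> \sum_(x \in D) F x <= \sum_(x \in D) G x.
Proof.
move=> fD FG; rewrite !fsbig_finite // big_seq [X in _ <= X]big_seq.
by apply: ler_sum => x; rewrite in_fset_set // => /set_mem; apply: FG.
Qed.

Lemma ler_sum_subseq (F : T -> R) (s t : seq T) : uniq s -> uniq t ->
  {subset s <= t} -> (forall x, x \in t -> 0 <= F x) ->
  \sum_(x <- s) F x <= \sum_(x <- t) F x.
Proof.
move=> us ut st F0; rewrite [X in _ <= X](bigID (mem s)) /=.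
have -> : \sum_(x <- t | x \in s) F x = \sum_(x <- s) F x.
  rewrite -big_filter; apply/perm_big/uniq_perm; rewrite ?filter_uniq // => x.
  by rewrite mem_filter; apply/andP/idP => [[]//|xs]; rewrite xs st.
by rewrite lerDl big_seq_cond sumr_ge0 // => x /andP[xt _]; apply: F0.
Qed.

Lemma ler_sum_term (F : T -> R) (s : seq T) x : uniq s -> x \in s ->
  (forall y, y \in s -> 0 <= F y) -> F x <= \sum_(y <- s) F y.
Proof.
move=> us xs F0; rewrite (bigD1_seq x) //= lerDl big_seq_cond sumr_ge0 // => y.
by case/andP => ys _; apply: F0.
Qed.

Lemma sumr2_ge0_sym (s : seq T) (P : pred T) (a : T -> T -> R) :
  (forall x y, 0 <= a x y + a y x) ->
  0 <= \sum_(x <- s | P x) \sum_(y <- s | P y) a x y.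
Proof.
move=> a_sym; set S := \sum_(x <- s | P x) _.
suff : 0 <= S + S by rewrite -mulr2n pmulrn_lge0.
have -> : S + S = \sum_(x <- s | P x) \sum_(y <- s | P y) (a x y + a y x).
  rewrite {2}/S exchange_big /= /S -big_split /=.
  by apply: eq_bigr => x _; rewrite -big_split.
by apply: sumr_ge0 => x _; apply: sumr_ge0 => y _; apply: a_sym.
Qed.

End FiniteSums.

Lemma expR_natmul_unbounded (R : realType) (b M : R) n1 :
  0 < b -> exists2 j, (n1 <= j)%N & M < expR (b * j%:R).
Proof.
move=> b0; set j := (n1 + (Num.Def.truncn (M / b)).+1)%N.
exists j; first exact: leq_addr.
apply: lt_le_trans (expR_ge1Dx _); rewrite -ltrBlDl.
have : M / b < j%:R.
  apply: lt_le_trans (truncnS_gt _) _; rewrite ler_nat; exact: leq_addl.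
rewrite ltr_pdivrMr // mulrC => Mj; lra.
Qed.

Lemma geometric_le_expR (R : realType) (f : nat -> R) (beta kappa C : R) N0 n1 :
  0 < f N0 -> 0 <= beta -> (forall n, beta * f n <= f n.+1) ->
  (forall n, (n1 <= n)%N -> f n <= C * expR (kappa * n%:R)) ->
  beta <= expR kappa.
Proof.
move=> f0 beta0 f_incr f_bound; rewrite leNgt; apply/negP => kbeta.
have grow j : beta ^+ j * f N0 <= f (N0 + j)%N.
  elim: j => [|j IH]; first by rewrite expr0 mul1r addn0.
  by rewrite exprS -mulrA addnS; apply: le_trans (f_incr _); apply: ler_wpM2l.
have ek := expR_gt0 kappa.
have rho1 : 1 < beta / expR kappa by rewrite ltr_pdivlMr // mul1r.
set M := C * expR (kappa * N0%:R) / f N0.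
have [j jn1] := expR_natmul_unbounded M n1 (ln_gt0 rho1).
apply/negP; rewrite -leNgt expRM_natr lnK ?posrE ?(lt_trans ltr01) //.
have := le_trans (grow j) (f_bound _ (leq_trans jn1 (leq_addl _ _))).
rewrite natrD mulrDr expRD /M expr_div_n ler_pdivlMr // mulrAC.
by rewrite ler_pdivrMr ?exprn_gt0 // -expRM_natr mulrA.
Qed.

Lemma powR_expRln (R : realType) (a x : R) : 0 < a -> powR a x = expR (x * ln a).
Proof. by move=> a0; rewrite /powR gt_eqF. Qed.

Section SignedPower.
Variables (R : realType) (m : R).

Definition spow (t : R) : R := powR `|t| (m - 2) * t.

Lemma spow0 : spow 0 = 0.
Proof. by rewrite /spow mulr0. Qed.

Lemma spowN t : spow (- t) = - spow t.
Proof. by rewrite /spow normrN mulrN. Qed.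

Hypothesis m_gt1 : 1 < m.

Lemma spow_gt0E t : 0 < t -> spow t = powR t (m - 1).
Proof.
move=> t0; rewrite /spow gtr0_norm // mulrC (_ : m - 2 = (m - 1) - 1).
  by rewrite mulr_powRB1 ?ltW // subr_gt0.
by rewrite -addrA -opprD.
Qed.

End SignedPower.

Section Constants.
Variables (R : realType) (p0 m q : R).

Definition harnack_const : R := 1 + powR p0 (m - 1)^-1.

(* The edge bound - flux x y <= flux_const * source y comes, for q > 0, from
   |u x - u y| <= sqrt (2 p0) |grad u| (y), for q < 0 from the Harnack bound
   |grad u| (y) <= harnack_const * u y. *)
Definition flux_const : R :=
  if 0 < q then powR (Num.sqrt (2 * p0)) q else powR harnack_const (- q).

Lemma harnack_const_ge1 : 1 <= harnack_const.
Proof. by rewrite lerDl powR_ge0. Qed.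

Lemma flux_const_gt0 : 0 < p0 -> 0 < flux_const.
Proof.
move=> p0_gt0; rewrite /flux_const; case: ifP => _; apply: powR_gt0.
  by rewrite sqrtr_gt0 mulr_gt0.
exact: lt_le_trans ltr01 harnack_const_ge1.
Qed.

End Constants.

Section Solution.
Variables (R : realType) (V : choiceType) (adj : V -> V -> Prop) (mu : V -> V -> R).
Variables (p0 m p q : R) (u : V -> R).
Hypotheses (sg : simple_graph adj) (lf : locally_finite adj)
  (conn : graph_connected adj) (inf : infinite_graph V) (wt : is_weight adj mu)
  (cp : cond_p0 adj mu p0) (m_gt1 : 1 < m) (pq : p + q = m - 1)
  (sol : nontriv_pos_sol adj mu m p q u).

Let N x := [set y | adj x y].
Let A := harnack_const p0 m.

Definition flux x y := spow m (u y - u x) * powR (u x) (1 - m).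
Definition source x := powR (u x) (1 - m) * (powR (u x) p * powR (gradn adj mu u x) q).

Lemma sol_gt0 x : 0 < u x. Proof. by case: sol => _ [] ->. Qed.
Lemma p0_gt0 : 0 < p0. Proof. by case: cp => /(lt_trans ltr01). Qed.
Lemma mu_ge0 x y : 0 <= mu x y. Proof. by case: wt => _ []. Qed.
Lemma mu_sym x y : mu x y = mu y x. Proof. by case: wt. Qed.
Lemma mu_gt0 x y : adj x y -> 0 < mu x y. Proof. by case: wt => _ [_] /(_ x y) []. Qed.

Lemma mu_eq0 x y : ~ adj x y -> mu x y = 0.
Proof.
move=> nxy; apply/eqP; rewrite eq_le mu_ge0 andbT leNgt; apply/negP => mu_pos.
by apply: nxy; case: wt => _ [_] /(_ x y) [] /(_ mu_pos).
Qed.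

Lemma mu_le_vmeas x y : adj x y -> mu x y <= vmeas adj mu x.
Proof. by move=> axy; apply: fsbig_ge_term (lf x) axy _ => z _; apply: mu_ge0. Qed.

Lemma vmeas_gt0 x : 0 < vmeas adj mu x.
Proof.
have [y axy] := infinite_exists_adj conn inf x.
exact: lt_le_trans (mu_gt0 axy) (mu_le_vmeas axy).
Qed.

Lemma vmeas_le_mu x y : adj x y -> vmeas adj mu x <= p0 * mu x y.
Proof.
move=> axy; case: cp => _ /(_ x y axy); rewrite ler_pdivlMr ?vmeas_gt0 //.
by rewrite -(ler_pM2l p0_gt0) mulrA mulfV ?gt_eqF ?p0_gt0 // mul1r.
Qed.

Lemma flux_balance x :
  \sum_(y \in N x) mu x y * flux x y + vmeas adj mu x * source x <= 0.
Proof.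
case: sol => _ [_] /(_ x) [_]; rewrite /mLap => sol_x.
have w0 : 0 < vmeas adj mu x * powR (u x) (1 - m).
  by rewrite mulr_gt0 ?vmeas_gt0 ?powR_gt0 ?sol_gt0.
rewrite -(pmulr_rle0 _ w0) mulrDr in sol_x; apply: le_trans sol_x.
rewrite /source /flux le_eqVlt; apply/orP; left; apply/eqP.
congr (_ + _); last by rewrite mulrA.
rewrite mulrCA !mulrA mulVf ?gt_eqF ?vmeas_gt0 // mul1r mulr_fsumr.
by apply: eq_fsbigr => y _; rewrite /spow; ring.
Qed.

Lemma sum_spow_le0 y : \sum_(w \in N y) mu y w * spow m (u w - u y) <= 0.
Proof.
case: sol => _ [_] /(_ y) [_]; rewrite /mLap => sol_y.
have iv0 : 0 < (vmeas adj mu y)^-1 by rewrite invr_gt0 vmeas_gt0.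
rewrite -(pmulr_rle0 _ iv0).
by apply: le_trans sol_y; rewrite lerDl mulr_ge0 ?powR_ge0.
Qed.

Lemma spow_diff_ge y w : - powR (u y) (m - 1) <= spow m (u w - u y).
Proof.
case: (leP (u y) (u w)) => [uyw|uwy].
  rewrite (le_trans _ (_ : 0 <= _)) ?oppr_le0 ?powR_ge0 //.
  by rewrite /spow mulr_ge0 ?powR_ge0 ?subr_ge0.
rewrite -[u w - u y]opprB spowN spow_gt0E ?subr_gt0 // lerN2.
by apply: ge0_ler_powR; rewrite ?nnegrE ?subr_ge0 ?ltW ?gtrBl ?sol_gt0 // ltW.
Qed.

Lemma harnack y z : adj y z -> u z <= A * u y.
Proof.
move=> ayz; set P := powR (u y) (m - 1).
have spowP w : 0 <= spow m (u w - u y) + P by rewrite -lerBlDr sub0r spow_diff_ge.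
(* By [spow_diff_ge] all terms of [sum_spow_le0] become nonnegative once
   shifted by P, so a single shifted term is at most P vmeas y. *)
have key : mu y z * (spow m (u z - u y) + P) <= P * (p0 * mu y z).
  apply: (@le_trans _ _ (\sum_(w \in N y) mu y w * (spow m (u w - u y) + P))).
    by apply: fsbig_ge_term (lf y) ayz _ => w _; rewrite mulr_ge0 ?mu_ge0.
  under eq_fsbigr do rewrite mulrDr.
  rewrite fsbig_split; last exact: lf.
  apply: (@le_trans _ _ (P * vmeas adj mu y)).
    rewrite -[X in _ <= X]add0r lerD ?sum_spow_le0 // /vmeas mulr_fsumr.
    by apply: ler_fsum (lf y) _ => w _; rewrite mulrC.
  by rewrite ler_wpM2l ?powR_ge0 ?vmeas_le_mu.
case: (leP (u z) (u y)) => [uzy|uyz].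
  by rewrite (le_trans uzy) // ler_peMl ?harnack_const_ge1 ?ltW ?sol_gt0.
have d0 : 0 < u z - u y by rewrite subr_gt0.
have : powR (u z - u y) (m - 1) <= p0 * P.
  rewrite -(spow_gt0E m_gt1 d0) -(ler_pM2l (mu_gt0 ayz)).
  have := mulr_ge0 (mu_ge0 y z) (powR_ge0 (u y) (m - 1)); rewrite -/P; lra.
rewrite /P !powR_expRln ?sol_gt0 // -[p0]lnK ?posrE ?p0_gt0 // -expRD ler_expR.
rewrite -(ler_pM2l (_ : 0 < (m - 1)^-1)) ?invr_gt0 ?subr_gt0 //.
rewrite mulrDr !mulrA mulVf ?gt_eqF ?subr_gt0 // !mul1r => ln_le.
rewrite /A /harnack_const mulrDl mul1r -lerBlDl.
rewrite powR_expRln ?p0_gt0 // -[u z - u y]lnK ?posrE //.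
rewrite -[X in _ * X]lnK ?posrE ?sol_gt0 //.
by rewrite -expRD ler_expR.
Qed.

Lemma gradn_le_harnack y : gradn adj mu u y <= A * u y.
Proof.
have Au0 : 0 <= A * u y.
  by rewrite mulr_ge0 ?ltW ?sol_gt0 ?(lt_le_trans ltr01 (harnack_const_ge1 _ _)).
rewrite -[X in _ <= X]ger0_norm // -sqrtr_sqr /gradn ler_sqrt ?sqr_ge0 //.
have v0 := vmeas_gt0 y.
apply: (@le_trans _ _ (\sum_(z \in N y) mu y z / (2 * vmeas adj mu y) * (A * u y) ^+ 2)).
  apply: ler_fsum (lf y) _ => z ayz; apply: ler_wpM2l.
    by rewrite divr_ge0 ?mu_ge0 ?mulr_ge0 // ltW.
  rewrite -real_normK ?num_real // -[X in _ <= X]real_normK ?num_real //.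
  rewrite ler_sqr ?nnegrE // [X in _ <= X]ger0_norm // ler_norml.
  have uyA : u y <= A * u y by rewrite ler_peMl ?harnack_const_ge1 ?ltW ?sol_gt0.
  have := harnack ayz; have := sol_gt0 y; have := sol_gt0 z.
  move=> uz0 uy0 uzA; apply/andP; split; lra.
rewrite -mulr_fsuml -mulr_fsuml -/(vmeas adj mu y).
rewrite [vmeas _ _ _ / _]mulrC invfM divfK ?gt_eqF //.
have := sqr_ge0 (A * u y); lra.
Qed.

Lemma diff_le_gradn y z : adj y z ->
  `|u z - u y| <= Num.sqrt (2 * p0) * gradn adj mu u y.
Proof.
move=> ayz; have v0 := vmeas_gt0 y.
have p0_2 : 0 <= 2 * p0 by rewrite mulr_ge0 ?ltW ?p0_gt0.
pose F w := mu y w / (2 * vmeas adj mu y) * (u w - u y) ^+ 2.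
have F0 w : 0 <= F w by rewrite mulr_ge0 ?sqr_ge0 ?divr_ge0 ?mu_ge0 ?mulr_ge0 ?ltW.
rewrite /gradn -sqrtrM // -sqrtr_sqr ler_sqrt; last first.
  by rewrite mulr_ge0 //; apply: fsumr_ge0 => w _; apply: F0.
apply: (@le_trans _ _ (2 * p0 * F z)); last first.
  by rewrite ler_wpM2l //; apply: fsbig_ge_term (lf y) ayz _ => w _; apply: F0.
have -> : 2 * p0 * F z = p0 * (mu y z / vmeas adj mu y) * (u z - u y) ^+ 2.
  by rewrite /F; field; rewrite gt_eqF.
rewrite ler_peMl ?sqr_ge0 //; case: cp => _ /(_ y z ayz) p0_mu.
have p0_neq0 : p0 != 0 by rewrite gt_eqF ?p0_gt0.
by rewrite -(mulfV p0_neq0) ler_pM2l ?p0_gt0.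
Qed.

Lemma flux_ge0 x y : u x <= u y -> 0 <= flux x y.
Proof.
by move=> uxy; rewrite mulr_ge0 ?powR_ge0 // /spow mulr_ge0 ?powR_ge0 ?subr_ge0.
Qed.

Lemma oppflux_expR x y : u y < u x ->
  - flux x y = expR ((m - 1) * (ln (u x - u y) - ln (u x))).
Proof.
move=> uyx; have d0 : 0 < u x - u y by rewrite subr_gt0.
rewrite /flux -[u y - u x]opprB spowN (spow_gt0E m_gt1 d0) mulNr opprK.
rewrite !powR_expRln ?sol_gt0 //.
by rewrite -expRD mulrDr mulrN -mulNr opprB.
Qed.

Lemma flux_antisym_ge0 x y : 0 <= flux x y + flux y x.
Proof.
wlog uxy : x y / u x <= u y.
  by move=> H; case: (leP (u x) (u y)) => [/H//|/ltW/H]; rewrite addrC.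
rewrite /flux; move: uxy; rewrite le_eqVlt => /orP[/eqP->|uxy].
  by rewrite subrr spow0 !mul0r addr0.
rewrite -[u x - u y]opprB spowN !(spow_gt0E m_gt1) ?subr_gt0 // mulNr -mulrBr.
rewrite mulr_ge0 ?powR_ge0 // subr_ge0 !powR_expRln ?sol_gt0 // ler_expR.
by rewrite ler_nM2l ?subr_lt0 // ler_ln ?posrE ?sol_gt0 // ltW.
Qed.

Lemma oppflux_le1 x y : - flux x y <= 1.
Proof.
case: (leP (u x) (u y)) => [/flux_ge0 f0|uyx].
  by rewrite (le_trans _ ler01) ?oppr_le0.
rewrite oppflux_expR // expR_le1 pmulr_rle0 ?subr_gt0 // subr_le0.
by rewrite ler_ln ?posrE ?sol_gt0 ?subr_gt0 // gerBl ltW ?sol_gt0.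
Qed.

Let K := flux_const p0 m q.

Lemma source_ge0 y : 0 <= source y.
Proof. by rewrite !mulr_ge0 ?powR_ge0. Qed.

Lemma source_expR y : 0 < gradn adj mu u y ->
  source y = expR (q * (ln (gradn adj mu u y) - ln (u y))).
Proof.
move=> G0; rewrite /source !powR_expRln ?sol_gt0 // -!expRD; congr expR.
rewrite (_ : p = m - 1 - q); last by rewrite -pq addrK.
ring.
Qed.

Lemma oppflux_le_source_qpos x y : 0 <= p -> 0 < q -> adj x y ->
  - flux x y <= K * source y.
Proof.
move=> p_ge0 q_gt0 axy; have K0 : 0 < K by apply/flux_const_gt0/p0_gt0.
case: (leP (u x) (u y)) => [/flux_ge0 f0|uyx].
  by apply: (@le_trans _ _ 0); rewrite ?oppr_le0 // mulr_ge0 ?source_ge0 ?(ltW K0).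
have d0 : 0 < u x - u y by rewrite subr_gt0.
have S0 : 0 < Num.sqrt (2 * p0) by rewrite sqrtr_gt0 mulr_gt0 ?p0_gt0.
have := diff_le_gradn (sg.1 _ _ axy); rewrite gtr0_norm // => d_le.
have G0 : 0 < gradn adj mu u y by rewrite -(pmulr_rgt0 _ S0) (lt_le_trans d0).
have ux0 := sol_gt0 x; have uy0 := sol_gt0 y.
rewrite oppflux_expR // source_expR // /K /flux_const q_gt0 powR_expRln //.
rewrite -expRD ler_expR.
set a := ln (u x - u y); set b := ln (u x); set c := ln (u y).
set e := ln (Num.sqrt (2 * p0)); set g := ln (gradn adj mu u y).
have ab : a <= b by rewrite ler_ln ?posrE // gerBl ltW.
have cb : c <= b by rewrite ler_ln ?posrE // ltW.
have aeg : a <= e + g by rewrite -lnM ?posrE // ler_ln ?posrE ?mulr_gt0.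
have K1 : 0 <= p * (b - a) by rewrite mulr_ge0 ?subr_ge0.
have K2 : 0 <= q * (e + g - a) by rewrite mulr_ge0 ?subr_ge0 // ltW.
have K3 : 0 <= q * (b - c) by rewrite mulr_ge0 ?subr_ge0 // ltW.
(* (p + q) (a - b) <= q (a - b) <= q (e + g - c) *)
rewrite -pq; nra.
Qed.

Lemma oppflux_le_source_qneg x y : q < 0 -> - flux x y <= K * source y.
Proof.
move=> q_lt0; apply: le_trans (oppflux_le1 x y) _.
have G0 : 0 < gradn adj mu u y.
  case: sol => _ [_] /(_ y) [/(_ q_lt0) G_neq0 _].
  by rewrite lt_neqAle eq_sym sqrtr_ge0 andbT; apply/eqP.
have A0 : 0 < A by apply: lt_le_trans ltr01 (harnack_const_ge1 _ _).
rewrite source_expR // /K /flux_const ltNge (ltW q_lt0) /= powR_expRln //.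
rewrite -expRD -expR0 ler_expR.
have : ln (gradn adj mu u y) <= ln A + ln (u y).
  by rewrite -lnM ?posrE ?sol_gt0 // ler_ln ?posrE ?mulr_gt0 ?sol_gt0 ?gradn_le_harnack.
nra.
Qed.

Hypothesis pq_sign : (0 <= p /\ 0 < q) \/ q < 0.

Lemma oppflux_le_source x y : adj x y -> - flux x y <= K * source y.
Proof.
case: pq_sign => [[p_ge0 q_gt0]|q_lt0] axy.
  exact: oppflux_le_source_qpos.
exact: oppflux_le_source_qneg.
Qed.

Lemma sum_adj_seq x (s : seq V) (G : V -> R) : uniq s ->
  (forall y, adj x y -> y \in s) ->
  \sum_(y \in N x) mu x y * G y = \sum_(y <- s) mu x y * G y.
Proof.
move=> us sx; apply: fsbig_fwiden => // y [_ nxy].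
by rewrite /= mu_eq0 ?mul0r.
Qed.

Lemma sum_mu_le x (s : seq V) (P : pred V) (D : set V) : uniq s -> finite_set D ->
  (forall y, y \in s -> P y -> adj x y -> D y) ->
  \sum_(y <- s | P y) mu x y <= \sum_(y <- fset_set D) mu x y.
Proof.
move=> us fD sD; rewrite (bigID (fun y => `[< adj x y >])) /=.
rewrite [X in _ + X]big1 ?addr0 => [|y /andP[_ /asboolPn /mu_eq0]//].
rewrite -big_filter; apply: ler_sum_subseq; rewrite ?filter_uniq ?fset_uniq //.
  move=> y; rewrite mem_filter => /andP[/andP[Py /asboolP axy] ys].
  by rewrite in_fset_set //; apply/mem_set/sD.
by move=> y _; apply: mu_ge0.
Qed.

Variable o : V.
Let d x := gdist adj o x.
Let ball n : seq V := fset_set [set x | (d x <= n)%N].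

Definition mass n := \sum_(x <- ball n) vmeas adj mu x * source x.

Definition outflux n := \sum_(x <- ball n.+1 | (d x <= n)%N)
  \sum_(y <- ball n.+1 | ~~ (d y <= n)%N) mu x y * - flux x y.

Lemma mem_ball n x : (x \in ball n) = (d x <= n)%N.
Proof.
rewrite /ball in_fset_set; last exact: ball_finite.
by apply/idP/idP => [/set_mem|dx] //; apply/mem_set.
Qed.

Lemma sum_ball_le (f : V -> R) n k : (n <= k)%N ->
  \sum_(x <- ball k | (d x <= n)%N) f x = \sum_(x <- ball n) f x.
Proof.
move=> nk; rewrite -big_filter; apply/perm_big/uniq_perm.
- exact/filter_uniq/fset_uniq.
- exact: fset_uniq.
move=> x; rewrite mem_filter !mem_ball.
by apply/andP/idP => [[]//|dx]; split=> //; apply: leq_trans dx nk.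
Qed.

Lemma adj_mem_ball n x : (d x <= n)%N -> forall y, adj x y -> y \in ball n.+1.
Proof. by move=> dx y axy; rewrite mem_ball (leq_trans (gdist_adj conn o axy)). Qed.

(* Summing the balance over the ball, the fluxes between two inner vertices
   cancel up to a nonnegative term by [flux_antisym_ge0]. *)
Lemma mass_le_outflux n : mass n <= outflux n.
Proof.
rewrite /mass -(sum_ball_le _ (leqnSn n)).
apply: (@le_trans _ _ (\sum_(x <- ball n.+1 | (d x <= n)%N)
   - \sum_(y <- ball n.+1) mu x y * flux x y)).
  apply: ler_sum => x dx; rewrite -(sum_adj_seq _ (fset_uniq _) (adj_mem_ball dx)).
  by have := flux_balance x; lra.
under eq_bigr do rewrite (bigID (fun y => (d y <= n)%N)) /= opprD -sumrN.
rewrite big_split /= /outflux -[X in _ <= X]add0r; apply: lerD.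
  under eq_bigr do rewrite sumrN; rewrite sumrN oppr_le0.
  apply: (@sumr2_ge0_sym _ _ _ _ (fun x y => mu x y * flux x y)) => x y.
  by rewrite mu_sym -mulrDr mulr_ge0 ?mu_ge0 ?flux_antisym_ge0.
by apply: ler_sum => x _; rewrite -sumrN; apply: ler_sum => y _; rewrite mulrN.
Qed.

Lemma mass_increment n : mass n.+1 - mass n =
  \sum_(y <- ball n.+1 | ~~ (d y <= n)%N) vmeas adj mu y * source y.
Proof.
by rewrite {1}/mass (bigID (fun x => (d x <= n)%N)) /= sum_ball_le // addrC addrK.
Qed.

Lemma outflux_le_mass_increment n : outflux n <= K * (mass n.+1 - mass n).
Proof.
rewrite mass_increment mulr_sumr /outflux.
apply: (@le_trans _ _ (\sum_(x <- ball n.+1 | (d x <= n)%N)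
   \sum_(y <- ball n.+1 | ~~ (d y <= n)%N) mu x y * (K * source y))).
  apply: ler_sum => x _; apply: ler_sum => y _.
  case: (pselect (adj x y)) => [axy|nxy]; last by rewrite mu_eq0 // !mul0r.
  by rewrite ler_pM2l ?mu_gt0 ?oppflux_le_source.
rewrite exchange_big /=; apply: ler_sum => y _.
rewrite -mulr_suml mulrCA ler_pM2l ?flux_const_gt0 ?p0_gt0 //.
apply: ler_wpM2r; first exact: source_ge0.
rewrite /vmeas fsbig_finite; last exact: lf.
under [X in X <= _]eq_bigr do rewrite mu_sym.
by apply: sum_mu_le; rewrite ?fset_uniq.
Qed.

Lemma outflux_le_W n : outflux n <= W_o adj mu o n.
Proof.
rewrite /outflux sum_ball_le // /W_o fsbig_finite; last exact: ball_finite.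
rewrite big_seq [X in _ <= X]big_seq; apply: ler_sum => x; rewrite mem_ball => dx.
apply: (@le_trans _ _ (\sum_(y <- ball n.+1 | ~~ (d y <= n)%N) mu x y)).
  by apply: ler_sum => y _; rewrite ler_piMr ?mu_ge0 ?oppflux_le1.
have fD : finite_set ([set y | (d x < d y)%N] `&` N x).
  by apply: sub_finite_set (lf x) => y [].
rewrite -(fsbig_widen ([set y | (d x < d y)%N] `&` N x)) => [||y [dy /= nxy]].
- rewrite fsbig_finite //; apply: sum_mu_le; rewrite ?fset_uniq // => y _ dy axy.
  by split=> //=; rewrite (leq_ltn_trans dx) // ltnNge.
- by move=> y [].
by rewrite mu_eq0 // => axy; apply: nxy.
Qed.

Lemma mass_gt0 : exists n, 0 < mass n.
Proof.
have [x [y [axy uxy]]] := exists_adj_neq conn sol.1.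
have S0 : 0 < Num.sqrt (2 * p0) by rewrite sqrtr_gt0 mulr_gt0 ?p0_gt0.
have d0 : 0 < `|u y - u x| by rewrite normr_gt0 subr_eq0; apply/eqP => /esym.
have G0 : 0 < gradn adj mu u x.
  by rewrite -(pmulr_rgt0 _ S0); apply: lt_le_trans d0 (diff_le_gradn axy).
exists (d x); apply: lt_le_trans (_ : 0 < vmeas adj mu x * source x) _.
  by rewrite !mulr_gt0 ?vmeas_gt0 ?powR_gt0 ?sol_gt0.
apply: (ler_sum_term (F := fun x => vmeas adj mu x * source x)).
- exact: fset_uniq.
- by rewrite mem_ball.
- by move=> z _; rewrite mulr_ge0 ?source_ge0 ?ltW ?vmeas_gt0.
Qed.

Lemma mass_geometric n : (1 + K^-1) * mass n <= mass n.+1.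
Proof.
have K0 : 0 < K by apply/flux_const_gt0/p0_gt0.
have := le_trans (mass_le_outflux n) (outflux_le_mass_increment n).
have iK0 : 0 < K^-1 by rewrite invr_gt0.
rewrite -(ler_pM2l iK0) mulrA mulVf ?gt_eqF // mul1r; lra.
Qed.

Lemma W_o_not_bounded kappa C n1 : kappa < ln (1 + K^-1) ->
  ~ (forall n, (n1 <= n)%N -> W_o adj mu o n <= C * expR (kappa * n%:R)).
Proof.
move=> kappa_lt W_bound; have [n0 mass0] := mass_gt0.
have K0 : 0 < K by apply/flux_const_gt0/p0_gt0.
have rate0 : 0 < 1 + K^-1 by rewrite addr_gt0 ?invr_gt0.
suff : 1 + K^-1 <= expR kappa.
  by rewrite -ler_ln ?posrE ?expR_gt0 // expRK leNgt kappa_lt.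
apply: (@geometric_le_expR _ _ _ _ C _ n1 mass0 (ltW rate0) mass_geometric) => n n1n.
exact: le_trans (mass_le_outflux n) (le_trans (outflux_le_W n) (W_bound n n1n)).
Qed.

End Solution.

Theorem theorem1p1 (R : realType) (p0 m p q : R) :
  1 < p0 -> 1 < m ->
  ((p + q = m - 1 /\ 0 <= p /\ 0 < q) \/ (p + q = m - 1 /\ q < 0 /\ m < 3)) ->
  exists k0 : R, 0 < k0 /\
    forall (V : choiceType) (adj : V -> V -> Prop) (mu : V -> V -> R) (o : V),
      simple_graph adj -> locally_finite adj -> graph_connected adj ->
      infinite_graph V -> is_weight adj mu -> cond_p0 adj mu p0 ->
      forall (kappa C : R) (n1 : nat),
        0 < kappa -> kappa < k0 -> 0 < C ->
        (forall n : nat, (n1 <= n)%N ->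
           W_o adj mu o n <= C * expR (kappa * n%:R)) ->
        ~ (exists u : V -> R, nontriv_pos_sol adj mu m p q u).
Proof.
move=> p0_gt1 m_gt1 pq_range; set K := flux_const p0 m q.
have K0 : 0 < K by apply/flux_const_gt0/(lt_trans ltr01).
exists (ln (1 + K^-1)); split; first by rewrite ln_gt0 // ltrDl invr_gt0.
move=> V adj mu o sg lf conn inf wt cp kappa C n1 _ kappa_lt _ W_bound [u sol].
have pq : p + q = m - 1 by case: pq_range => -[].
(* The restriction m < 3 of the case q < 0 is not needed. *)
have pq_sign : (0 <= p /\ 0 < q) \/ q < 0.
  by case: pq_range => [[_ pq_pos]|[_ [q_lt0 _]]]; [left|right].
exact: (W_o_not_bounded sg lf conn inf wt cp m_gt1 pq sol pq_sign kappa_lt W_bound).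
Qed.
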